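(* There is a universal constant $C_1>1$ such that the following holds. Fix any $\rho,\delta\in(0,1)$. For every sufficiently large $d\in\mathbb{N}$, all $h,N\in\mathbb{N}$, and every $(u_1,u_2)\in\mathrm{Bases}^{2d}_{\rho,\delta}$, $$\Pr\left[\|R_{h,N}u_1\|_\infty\le \tfrac{1}{\sqrt{\delta d}}\ \text{and}\ \|R_{h,N}u_2\|_\infty\le\tfrac{1}{\sqrt{\delta d}}\right]\le C_1^h\,(\rho^4\delta d)^{-h},$$ where $R_{h,N}$ is an $h\times N$ matrix with i.i.d. uniform $\pm1$ entries.
   Context: $\mathbb{S}^{N-1}$ is the Euclidean unit sphere in $\mathbb{R}^N$. For $d\le N$, $S^N_d:=\{u\in\mathbb{R}^N:\|u\|_2=1,\ \|u\|_0\le d\}$, where $\|u\|_0$ is the number of nonzero coordinates and $\mathrm{supp}(u)$ the set of nonzero coordinates. For $\rho,\delta>0$, $\mathrm{Comp}^d_{\rho,\delta}:=\{u\in S^N_d : \exists\,\overline{T}\subseteq\mathrm{supp}(u),\ |\overline{T}|\le\delta d,\ \|u_{\mathrm{supp}(u)\setminus\overline{T}}\|_2\le\rho\}$ (here $u_A$ is the restriction of $u$ to coordinates in $A$). $\mathrm{Bases}^{d'}_{\rho,\delta}$ is the set of pairs $(u_1,u_2)\in\mathbb{S}^{N-1}\times\mathbb{S}^{N-1}$ such that $u_1,u_2$ are orthonormal, $|\mathrm{supp}(u_1)\cup\mathrm{supp}(u_2)|\le d'$, and $\mathrm{span}\{u_1,u_2\}\cap\mathrm{Comp}^{d'}_{\rho,\delta}=\emptyset$.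 *)

From HB Require Import structures.
From mathcomp Require Import all_boot all_order all_algebra.
From mathcomp Require Import Rstruct.
From Stdlib Require Import Rdefinitions.
Notation R := Rdefinitions.R.
Set Implicit Arguments. Unset Strict Implicit. Unset Printing Implicit Defensive.
Import Order.TTheory GRing.Theory Num.Theory.
Local Open Scope ring_scope.

Definition norm2 (N : nat) (u : 'cV[R]_N) : R := Num.sqrt (\sum_(i < N) u i 0 ^+ 2).
Definition norminf (N : nat) (u : 'cV[R]_N) : R := \big[Num.max/0]_(i < N) `|u i 0|.
Definition supp (N : nat) (u : 'cV[R]_N) : {set 'I_N} := [set i | u i 0 != 0].
Definition restr (N : nat) (A : {set 'I_N}) (u : 'cV[R]_N) : 'cV[R]_N :=
  \col_i (if i \in A then u i 0 else 0).
Definition dotv (N : nat) (u v : 'cV[R]_N) : R := \sum_(i < N) u i 0 * v i 0.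

Definition sparse_sphere (N d : nat) (u : 'cV[R]_N) : Prop :=
  norm2 u = 1 /\ (#|supp u| <= d)%nat.

Definition Comp (N d : nat) (rho delta : R) (u : 'cV[R]_N) : Prop :=
  sparse_sphere d u /\
  exists T : {set 'I_N}, [/\ T \subset supp u, (#|T|%:R <= delta * d%:R)
                            & norm2 (restr (supp u :\: T) u) <= rho].

Definition Bases (N d' : nat) (rho delta : R) (u1 u2 : 'cV[R]_N) : Prop :=
  [/\ norm2 u1 = 1, norm2 u2 = 1, dotv u1 u2 = 0,
      (#|supp u1 :|: supp u2| <= d')%nat
    & forall a b : R, ~ Comp d' rho delta (a *: u1 + b *: u2)].

Definition sgn_mx (h N : nat) (B : 'M[bool]_(h, N)) : 'M[R]_(h, N) :=
  \matrix_(i, j) (if B i j then 1 else -1).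

Definition prob_sign (h N : nat) (P : pred 'M[bool]_(h, N)) : R :=
  #|[set B : 'M[bool]_(h, N) | P B]|%:R / #|{: 'M[bool]_(h, N)}|%:R.

(* Esseen-type argument.  For one row [r] of signs write [X_i = <r, u_i>].  The
   indicator of [|X_1|, |X_2| <= tau] is at most [2 / M^4] times a product of Fejer
   kernels [K (t X_1) K (t X_2)], where [K x = |sum_(k < M) e^(i k x)|^2] is a nonnegative
   trigonometric polynomial of size about [M^2] near 0.  Averaging over [r] turns each
   frequency pair [(p, q)] into the characteristic function
   [prod_j cos (t (p u_1j + q u_2j))].  As the span of [u_1, u_2] contains no compressible
   vector, the coordinates where both [u_i] are at most [tau] carry a [rho^2] fraction of
   the mass of every combination, which bounds that product by [1 / ((1 + p^2)(1 + q^2))].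
   Summing over the frequencies gives [O (1 / M^2) = O (tau^2 / rho^2)] for one row, and
   the rows of the sign matrix are independent. *)

From HB Require Import structures.
From mathcomp Require Import all_boot all_order all_algebra.
From mathcomp Require Import Rstruct.
From Stdlib Require Import Reals.
From mathcomp Require Import lra ring.
Set Implicit Arguments. Unset Strict Implicit. Unset Printing Implicit Defensive.
Import Order.TTheory GRing.Theory Num.Theory.
Local Open Scope ring_scope.
(* Stdlib binds [R_scope] to [R]; rebind it so that terms cast to [R] are read in
   [ring_scope]. *)
#[local] Bind Scope ring_scope with Rdefinitions.R.
Local Arguments cos _%_ring_scope.
Local Arguments sin _%_ring_scope.

Lemma cos_taylor2 (y : R) : `|y| <= 1 ->
  1 - y ^+ 2 / 2 <= cos y <= 1 - y ^+ 2 / 2 + y ^+ 4 / 24.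
Proof.
move=> y1; have [ylo yhi] : -1 <= y /\ y <= 1 by move: y1; rewrite ler_norml => /andP[].
have two : IZR 2 = 2 by [].
have /RltP := PI2_1; rewrite RdivE two R1E => pi2.
have lo : (- PI / 2 <= y)%R by apply/RleP; rewrite RdivE RoppE two; lra.
have hi : (y <= PI / 2)%R by apply/RleP; rewrite RdivE two; lra.
have [/RleP + /RleP] := cos_bound y 0 lo hi.
have m1 : IZR (Zneg 1) = -1 by [].
rewrite /cos_approx /cos_term !sum_f_R0E !big_nat_recr // big_nil.
rewrite !RpowE !INRE !factE m1 !RmultE !RdivE /= !factS fact0.
rewrite expr0 expr1 sqrrN expr1n !mul1r => cl cu; lra.
Qed.

Lemma cos_ge_quad (y : R) : `|y| <= 1 -> 1 - y ^+ 2 / 2 <= cos y.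
Proof. by move=> /cos_taylor2 /andP[]. Qed.

Lemma norm_cos_le_quad (y : R) : `|y| <= 1 -> `|cos y| <= (1 - y ^+ 2 / 6) ^+ 2.
Proof.
move=> y1; have /andP[lo hi] := cos_taylor2 y1.
have y2 : y ^+ 2 <= 1 by rewrite -real_normK ?num_real // expr_le1.
have y4 : y ^+ 4 = y ^+ 2 * y ^+ 2 by rewrite -exprD.
have y20 := sqr_ge0 y.
rewrite ler_norml; apply/andP; split; rewrite y4 in hi *; nra.
Qed.

Lemma norm_cos_le1 (x : R) : `|cos x| <= 1.
Proof. by have [/RleP lo /RleP hi] := COS_bound x; rewrite ler_norml lo hi. Qed.

Lemma cosN (x : R) : cos (- x) = cos x.
Proof. exact: cos_neg. Qed.

Lemma cosB (a b : R) : cos (a - b) = cos a * cos b + sin a * sin b.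
Proof. by have := cos_minus a b; rewrite RminusE RplusE !RmultE. Qed.

Lemma cosDB (a b : R) : cos (a + b) + cos (a - b) = 2 * cos a * cos b.
Proof. rewrite cosD cosB; ring. Qed.

Definition sg (b : bool) : R := if b then 1 else -1.

Definition sign_sum N (u : 'cV[R]_N) (r : 'rV[bool]_N) : R := \sum_j sg (r 0 j) * u j 0.

Definition small_sign_sums N (tau : R) (u1 u2 : 'cV[R]_N) : pred 'rV[bool]_N :=
  fun r => (`|sign_sum u1 r| <= tau) && (`|sign_sum u2 r| <= tau).

Definition flip_at N (j0 : 'I_N) (r : 'rV[bool]_N) : 'rV[bool]_N :=
  \row_j (if j == j0 then ~~ r 0 j else r 0 j).

Lemma flip_atK N (j0 : 'I_N) : involutive (flip_at j0).
Proof.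
move=> r; apply/matrixP => i j; rewrite !mxE (ord1 i).
by case: (j == j0); rewrite ?negbK.
Qed.

Lemma cos_sg_mul (b : bool) (x : R) : cos (sg b * x) = cos x.
Proof. by case: b; rewrite /sg ?mul1r ?mulN1r ?cosN. Qed.

Lemma sum_cos_signs_seq N (w : 'I_N -> R) (s : seq 'I_N) : uniq s ->
  \sum_(r : 'rV[bool]_N) cos (\sum_(j <- s) sg (r 0 j) * w j)
  = #|{: 'rV[bool]_N}|%:R * \prod_(j <- s) cos (w j).
Proof.
elim: s => [|j0 s IH] /=.
  by under eq_bigr do rewrite big_nil cos_0; rewrite big_nil sumr_const mulr1.
move=> /andP[j0s us].
pose S (r : 'rV[bool]_N) := \sum_(j <- s) sg (r 0 j) * w j.
have S_flip r : S (flip_at j0 r) = S r.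
  apply: eq_big_seq => j js; rewrite mxE.
  by case: eqP js j0s => [-> ->|].
pose f (r : 'rV[bool]_N) := cos (sg (r 0 j0) * w j0 + S r).
have f_flip : \sum_r f r = \sum_(r : 'rV[bool]_N) cos (- (sg (r 0 j0) * w j0) + S r).
  rewrite (reindex_inj (inv_inj (flip_atK j0))) /=; apply: eq_bigr => r _.
  by rewrite /f S_flip mxE eqxx; case: (r 0 j0); rewrite /sg /= ?mulN1r ?mul1r ?opprK.
have sum2 : 2 * \sum_r f r = 2 * (cos (w j0) * \sum_(r : 'rV[bool]_N) cos (S r)).
  rewrite mulr2n mulrDl mul1r {2}f_flip -big_split mulr_sumr mulr_sumr /=.
  apply: eq_bigr => r _.
  by rewrite /f (addrC (sg _ * _)) (addrC (- _)) cosDB cos_sg_mul; ring.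
under eq_bigr do rewrite big_cons.
rewrite big_cons (mulfI _ sum2) ?pnatr_eq0 // IH //; ring.
Qed.

Lemma sum_cos_signs N (w : 'I_N -> R) :
  \sum_(r : 'rV[bool]_N) cos (\sum_j sg (r 0 j) * w j)
  = #|{: 'rV[bool]_N}|%:R * \prod_j cos (w j).
Proof. exact/sum_cos_signs_seq/index_enum_uniq. Qed.

Lemma sign_sum_comb N (u1 u2 : 'cV[R]_N) (a b : R) r :
  a * sign_sum u1 r + b * sign_sum u2 r = \sum_j sg (r 0 j) * (a * u1 j 0 + b * u2 j 0).
Proof. rewrite /sign_sum !mulr_sumr -big_split; apply: eq_bigr => j _ /=; ring. Qed.

Lemma sum_cos_mul_sign_sums N (u1 u2 : 'cV[R]_N) (a b : R) :
  \sum_(r : 'rV[bool]_N) cos (a * sign_sum u1 r) * cos (b * sign_sum u2 r)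
  = #|{: 'rV[bool]_N}|%:R / 2 * (\prod_j cos (a * u1 j 0 + b * u2 j 0)
                                + \prod_j cos (a * u1 j 0 + - b * u2 j 0)).
Proof.
have half r : cos (a * sign_sum u1 r) * cos (b * sign_sum u2 r)
    = (cos (a * sign_sum u1 r + b * sign_sum u2 r)
       + cos (a * sign_sum u1 r + - b * sign_sum u2 r)) / 2.
  by rewrite mulNr cosDB; field.
rewrite (eq_bigr _ (fun r _ => half r)) -mulr_suml big_split /=.
under eq_bigr do rewrite sign_sum_comb.
under [X in _ + X]eq_bigr do rewrite sign_sum_comb.
by rewrite !sum_cos_signs; field.
Qed.

Definition fejer (M : nat) (x : R) : R :=
  \sum_(a : 'I_M * 'I_M) cos ((a.1%:R - a.2%:R) * x).

Lemma fejerE M x : fejer M x =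
  (\sum_(k < M) cos (k%:R * x)) ^+ 2 + (\sum_(k < M) sin (k%:R * x)) ^+ 2.
Proof.
rewrite /fejer -(pair_bigA _ (fun j k : 'I_M => cos ((j%:R - k%:R) * x))) /=.
rewrite !expr2 !big_distrlr -big_split; apply: eq_bigr => j _ /=.
by rewrite -big_split; apply: eq_bigr => k _; rewrite mulrBl cosB.
Qed.

Lemma fejer_ge0 M x : 0 <= fejer M x.
Proof. by rewrite fejerE addr_ge0 ?sqr_ge0. Qed.

Lemma fejer_ge M x : `|x| * M%:R <= 1 / 2 -> 49 / 64 * M%:R ^+ 2 <= fejer M x.
Proof.
move=> xM.
have cos_sum : 7 / 8 * M%:R <= \sum_(k < M) cos (k%:R * x).
  rewrite mulr_natr -[M in _ *+ M]card_ord -sumr_const.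
  apply: ler_sum => k _.
  have kx : `|k%:R * x| <= 1 / 2.
    have kM : k%:R <= M%:R :> R by rewrite ler_nat ltnW.
    rewrite normrM normr_nat mulrC; apply: le_trans xM.
    exact: ler_wpM2l.
  have /cos_ge_quad : `|k%:R * x| <= 1 by lra.
  rewrite -[_ ^+ 2]real_normK ?num_real //.
  have := normr_ge0 (k%:R * x); nra.
rewrite fejerE; have := sqr_ge0 (\sum_(k < M) sin (k%:R * x)).
have : 0 <= M%:R :> R by []; nra.
Qed.

Lemma fejer_mul_ge M x y : `|x| * M%:R <= 1 / 2 -> `|y| * M%:R <= 1 / 2 ->
  M%:R ^+ 4 / 2 <= fejer M x * fejer M y.
Proof.
move=> /fejer_ge fx /fejer_ge fy.
have M2 := sqr_ge0 (M%:R : R); have M4 : M%:R ^+ 4 = M%:R ^+ 2 * M%:R ^+ 2 :> R by rewrite -exprD.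
rewrite M4; nra.
Qed.

Lemma prod_1B_mul_1D_sum_le1 (I : Type) (s : seq I) (P : pred I) (c : I -> R) :
  (forall i, P i -> 0 <= c i <= 1) ->
  \prod_(i <- s | P i) (1 - c i) * (1 + \sum_(i <- s | P i) c i) <= 1.
Proof.
move=> c01; elim: s => [|i s IH]; first by rewrite !big_nil addr0 mulr1.
rewrite !big_cons; case: ifP => // Pi; have /andP[ci0 ci1] := c01 i Pi.
set Q := \prod_(j <- s | P j) _ in IH *; set T := \sum_(j <- s | P j) _ in IH *.
have Q0 : 0 <= Q by apply: prodr_ge0 => j /c01; lra.
have T0 : 0 <= T by apply: sumr_ge0 => j /c01 /andP[].
have Qc0 : 0 <= Q * c i * (c i + T) by rewrite !mulr_ge0 ?addr_ge0.
have -> : (1 - c i) * Q * (1 + (c i + T)) = Q * (1 + T) - Q * c i * (c i + T) by ring.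
lra.
Qed.

Lemma norm_prod_cos_le (I : finType) (S : pred I) (w : I -> R) :
  (forall j, S j -> `|w j| <= 1) ->
  `|\prod_j cos (w j)| * (1 + \sum_(j | S j) w j ^+ 2 / 6) ^+ 2 <= 1.
Proof.
move=> w1; set c := fun j => w j ^+ 2 / 6.
have c01 j : S j -> 0 <= c j <= 1.
  move/w1; rewrite /c -[w j ^+ 2]real_normK ?num_real //.
  by have := normr_ge0 (w j); move=> ? ?; apply/andP; split; nra.
set P := \prod_(j | S j) (1 - c j).
have P0 : 0 <= P by apply: prodr_ge0 => j /c01; lra.
have PS : P * (1 + \sum_(j | S j) c j) <= 1 := prod_1B_mul_1D_sum_le1 _ c01.
have cos_P : `|\prod_j cos (w j)| <= P ^+ 2.
  rewrite normr_prod (bigID S) /= -[X in _ <= X]mulr1 /P -prodrXl.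
  apply: ler_pM; rewrite ?prodr_ge0 //.
  - by apply: ler_prod => j Sj; rewrite normr_ge0 norm_cos_le_quad ?w1.
  - by apply: prodr_ile1 => j _; rewrite normr_ge0 norm_cos_le1.
have T0 : 0 <= 1 + \sum_(j | S j) c j.
  by rewrite addr_ge0 // sumr_ge0 // => j /c01 /andP[].
set T := 1 + _ in PS T0 *.
have PT0 : 0 <= P * T by rewrite mulr_ge0.
apply: le_trans (_ : (P * T) ^+ 2 <= 1); last by rewrite expr_le1.
by rewrite exprMn ler_wpM2r ?exprn_ge0.
Qed.

Definition decay (x : R) : R := 1 / (1 + x ^+ 2).

Lemma decay_gt0 x : 0 < decay x.
Proof. by rewrite divr_gt0 // ltr_wpDr ?sqr_ge0. Qed.

Lemma decayN x : decay (- x) = decay x.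
Proof. by rewrite /decay sqrrN. Qed.

Lemma decay_le_diff (m : R) : 1 <= m -> decay m <= 3 / (m + 1) - 3 / (m + 2).
Proof.
move=> m1; have m1_gt0 : 0 < m + 1 by lra.
have m2_gt0 : 0 < m + 2 by lra.
have -> : 3 / (m + 1) - 3 / (m + 2) = 3 / ((m + 1) * (m + 2)).
  by field; rewrite !gt_eqF.
rewrite /decay ler_pdivrMr ?ltr_wpDr ?sqr_ge0 // mulrAC ler_pdivlMr ?mulr_gt0 //.
rewrite expr2; nra.
Qed.

(* A discrete arctangent in [k - j]: it increases by at least [decay (j - k)] at each
   step and stays in [0, 6]. *)
Definition decay_potential (j k : nat) : R :=
  if (k <= j)%nat then 3 / (j%:R + 2 - k%:R) else 6 - 3 / (k%:R + 1 - j%:R).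

Lemma decay_le_potential_step (j k : nat) :
  decay (j%:R - k%:R) <= decay_potential j k.+1 - decay_potential j k.
Proof.
rewrite /decay_potential -addn1 natrD; case: (ltngtP k j) => [kj|jk|->].
- rewrite addn1 kj.
  have m1 : 1 <= j%:R - k%:R :> R by rewrite lerBrDr addrC natr1 ler_nat.
  have -> : j%:R + 2 - (k%:R + 1) = j%:R - k%:R + 1 :> R by ring.
  have -> : j%:R + 2 - k%:R = j%:R - k%:R + 2 :> R by ring.
  exact: decay_le_diff.
- rewrite addn1 ltnNge (ltnW jk) /= -opprB decayN.
  have m1 : 1 <= k%:R - j%:R :> R by rewrite lerBrDr addrC natr1 ler_nat.
  have -> : k%:R + 1 + 1 - j%:R = k%:R - j%:R + 2 :> R by ring.
  have -> : k%:R + 1 - j%:R = k%:R - j%:R + 1 :> R by ring.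
  have := decay_le_diff m1; lra.
- rewrite addn1 ltnn subrr /decay expr0n /= addr0 divr1.
  have -> : j%:R + 1 + 1 - j%:R = 2 :> R by ring.
  have -> : j%:R + 2 - j%:R = 2 :> R by ring.
  lra.
Qed.

Lemma sum_decay_le (M j : nat) : \sum_(k < M) decay (j%:R - k%:R) <= 6.
Proof.
apply: (@le_trans _ _ (\sum_(k < M) (decay_potential j k.+1 - decay_potential j k))).
  by apply: ler_sum => k _; apply: decay_le_potential_step.
rewrite -(big_mkord xpredT (fun k => decay_potential j k.+1 - decay_potential j k)).
rewrite telescope_sumr // /decay_potential leq0n subr0.
have j0 : 0 <= j%:R :> R by [].
have start : 0 <= 3 / (j%:R + 2) :> R by apply: divr_ge0; lra.
case: ifP => [Mj|/negbT]; last rewrite -ltnNge => jM.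
  have : M%:R <= j%:R :> R by rewrite ler_nat.
  move=> ?; have : 3 / (j%:R + 2 - M%:R) <= 3 :> R by rewrite ler_pdivrMr; lra.
  lra.
have : j%:R + 1 <= M%:R :> R by rewrite natr1 ler_nat.
move=> ?; have : 0 <= 3 / (M%:R + 1 - j%:R) :> R by apply: divr_ge0; lra.
lra.
Qed.

Lemma sum_pair_decay_le M :
  \sum_(a : 'I_M * 'I_M) decay (a.1%:R - a.2%:R) <= 6 * M%:R.
Proof.
rewrite -(pair_bigA _ (fun j k : 'I_M => decay (j%:R - k%:R))) /=.
rewrite mulr_natr -[M in _ *+ M]card_ord -sumr_const.
by apply: ler_sum => j _; apply: sum_decay_le.
Qed.

Lemma diff_ord_le M (a : 'I_M * 'I_M) : `|a.1%:R - a.2%:R| <= M%:R :> R.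
Proof.
have : a.1%:R < M%:R :> R by rewrite ltr_nat.
have : a.2%:R < M%:R :> R by rewrite ltr_nat.
have : 0 <= a.1%:R :> R by []; have : 0 <= a.2%:R :> R by [].
by rewrite ler_norml; move=> *; apply/andP; split; lra.
Qed.

Lemma sum_sqr_norm2 N (u : 'cV[R]_N) : norm2 u = 1 -> \sum_j u j 0 ^+ 2 = 1.
Proof.
have s0 : 0 <= \sum_j u j 0 ^+ 2 by apply: sumr_ge0 => j _; apply: sqr_ge0.
by rewrite /norm2 => u1; rewrite -(sqr_sqrtr s0) u1 expr1n.
Qed.

Lemma norm2_restr_sqr N (A : {set 'I_N}) (u : 'cV[R]_N) :
  norm2 (restr A u) ^+ 2 = \sum_(j in A) u j 0 ^+ 2.
Proof.
rewrite /norm2 sqr_sqrtr ?sumr_ge0 // => [|j _]; last exact: sqr_ge0.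
by rewrite [RHS]big_mkcond; apply: eq_bigr => j _; rewrite mxE; case: ifP; rewrite ?expr0n.
Qed.

Lemma not_Comp_tail N d' (rho delta : R) (v : 'cV[R]_N) (T : {set 'I_N}) :
  sparse_sphere d' v -> ~ Comp d' rho delta v ->
  T \subset supp v -> #|T|%:R <= delta * d'%:R ->
  rho < norm2 (restr (supp v :\: T) v).
Proof.
move=> sv nc sT cT; rewrite ltNge; apply/negP => tail.
by apply: nc; split=> //; exists T.
Qed.

Definition small_coords N (tau : R) (u1 u2 : 'cV[R]_N) : pred 'I_N :=
  fun j => u1 j 0 ^+ 2 + u2 j 0 ^+ 2 <= tau ^+ 2.

Lemma small_coords_le N (tau : R) (u1 u2 : 'cV[R]_N) : 0 <= tau ->
  forall j, small_coords tau u1 u2 j -> `|u1 j 0| <= tau /\ `|u2 j 0| <= tau.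
Proof.
rewrite /small_coords => tau0 j Sj.
have := sqr_ge0 (u1 j 0); have := sqr_ge0 (u2 j 0) => h2 h1.
by split; rewrite -(@ler_pXn2r _ 2) ?nnegrE ?normr_ge0 // real_normK ?num_real //; lra.
Qed.

Section Orthonormal.
Variables (N : nat) (u1 u2 : 'cV[R]_N).
Hypotheses (u1_unit : norm2 u1 = 1) (u2_unit : norm2 u2 = 1) (u12 : dotv u1 u2 = 0).

Lemma sum_sqr_comb a b :
  \sum_j (a * u1 j 0 + b * u2 j 0) ^+ 2 = a ^+ 2 + b ^+ 2.
Proof.
have -> : \sum_j (a * u1 j 0 + b * u2 j 0) ^+ 2 = a ^+ 2 * \sum_j u1 j 0 ^+ 2
    + 2 * a * b * dotv u1 u2 + b ^+ 2 * \sum_j u2 j 0 ^+ 2.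
  by rewrite /dotv !mulr_sumr -!big_split; apply: eq_bigr => j _ /=; ring.
by rewrite !sum_sqr_norm2 // u12; ring.
Qed.

Lemma card_large_coords tau :
  #|[set j | ~~ small_coords tau u1 u2 j]|%:R * tau ^+ 2 <= 2.
Proof.
rewrite mulr_natl -sumr_const.
apply: (@le_trans _ _ (\sum_j (u1 j 0 ^+ 2 + u2 j 0 ^+ 2))).
  rewrite [X in _ <= X](bigID (mem [set j | ~~ small_coords tau u1 u2 j])) /=.
  apply: ler_wpDr; first by rewrite sumr_ge0 // => j _; rewrite addr_ge0 ?sqr_ge0.
  by apply: ler_sum => j; rewrite inE -ltNge => /ltW.
by rewrite big_split /= !sum_sqr_norm2.
Qed.

End Orthonormal.

Lemma Bases_comb_sparse_sphere N d' (rho delta a b : R) (u1 u2 : 'cV[R]_N) :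
  Bases d' rho delta u1 u2 -> a ^+ 2 + b ^+ 2 = 1 -> sparse_sphere d' (a *: u1 + b *: u2).
Proof.
move=> [u1_unit u2_unit u12 supp12 _] ab1; split.
  rewrite /norm2; under eq_bigr do rewrite !mxE.
  by rewrite sum_sqr_comb // ab1 sqrtr1.
apply: leq_trans supp12; apply: subset_leq_card; apply/subsetP => j.
rewrite !inE !mxE; apply: contraR; rewrite negb_or !negbK => /andP[/eqP -> /eqP ->].
by rewrite !mulr0 addr0.
Qed.

(* The few large coordinates cannot carry all but [rho^2] of the mass of a unit
   vector of the span, or they would witness its compressibility. *)
Lemma Bases_comb_mass_small N d' (rho delta tau a b : R) (u1 u2 : 'cV[R]_N) :
  0 < tau -> 2 <= delta * d'%:R * tau ^+ 2 -> 0 <= rho ->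
  Bases d' rho delta u1 u2 -> a ^+ 2 + b ^+ 2 = 1 ->
  rho ^+ 2 <= \sum_(j | small_coords tau u1 u2 j) (a * u1 j 0 + b * u2 j 0) ^+ 2.
Proof.
move=> tau0 d'_large rho0 uB ab1; have [u1_unit u2_unit _ _ ncomp] := uB.
set v := a *: u1 + b *: u2.
have vE j : v j 0 = a * u1 j 0 + b * u2 j 0 by rewrite !mxE.
set L := [set j | ~~ small_coords tau u1 u2 j].
have cardT : #|supp v :&: L|%:R <= delta * d'%:R.
  have tau2 : 0 < tau ^+ 2 by rewrite exprn_gt0.
  have TL : #|supp v :&: L|%:R * tau ^+ 2 <= #|L|%:R * tau ^+ 2.
    by rewrite ler_pM2r // ler_nat subset_leq_card // subsetIr.
  have := card_large_coords u1_unit u2_unit tau; rewrite -/L => cardL.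
  rewrite -(ler_pM2r tau2); lra.
have := not_Comp_tail (Bases_comb_sparse_sphere uB ab1) (ncomp _ _) (subsetIl _ _) cardT.
move=> /ltW tail; apply: le_trans (_ : _ <= \sum_(j in supp v :\: (supp v :&: L)) v j 0 ^+ 2) _.
  by rewrite -norm2_restr_sqr lerXn2r ?nnegrE ?sqrtr_ge0.
rewrite big_mkcond [X in _ <= X]big_mkcond /=; apply: ler_sum => j _.
rewrite !inE -vE; case: (small_coords tau u1 u2 j); rewrite ?andbF ?andbT /=.
  by case: ifP; rewrite ?sqr_ge0.
by rewrite andNb.
Qed.

Lemma Bases_spread N d' (rho delta tau : R) (u1 u2 : 'cV[R]_N) :
  0 < tau -> 2 <= delta * d'%:R * tau ^+ 2 -> 0 <= rho ->
  Bases d' rho delta u1 u2 ->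
  forall p q : R, rho ^+ 2 * (p ^+ 2 + q ^+ 2)
    <= \sum_(j | small_coords tau u1 u2 j) (p * u1 j 0 + q * u2 j 0) ^+ 2.
Proof.
move=> tau0 d'_large rho0 uB p q.
set Q := p ^+ 2 + q ^+ 2.
have [Q0|Q_neq0] := eqVneq Q 0.
  by rewrite Q0 mulr0 sumr_ge0 // => j _; apply: sqr_ge0.
have Q_gt0 : 0 < Q by rewrite lt0r Q_neq0 addr_ge0 ?sqr_ge0.
set r := Num.sqrt Q.
have r_gt0 : 0 < r by rewrite sqrtr_gt0.
have r2 : r ^+ 2 = Q by rewrite sqr_sqrtr ?ltW.
have unit : (p / r) ^+ 2 + (q / r) ^+ 2 = 1.
  by rewrite !expr_div_n -mulrDl r2 divff.
have scale j : (p * u1 j 0 + q * u2 j 0) ^+ 2 / Q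
    = (p / r * u1 j 0 + q / r * u2 j 0) ^+ 2.
  by rewrite -r2; field; rewrite gt_eqF.
rewrite -ler_pdivlMr // mulr_suml; under eq_bigr do rewrite scale.
exact: Bases_comb_mass_small tau0 d'_large rho0 uB unit.
Qed.

Lemma sum_prod_rows h N (F : 'rV[bool]_N -> R) :
  \sum_(B : 'M[bool]_(h, N)) \prod_(i < h) F (row i B) = (\sum_r F r) ^+ h.
Proof.
rewrite -[in RHS](card_ord h) -prodr_const bigA_distr_bigA /=.
pose rows (B : 'M[bool]_(h, N)) := [ffun i => row i B].
have rows_bij : bijective rows.
  exists (fun f : {ffun 'I_h -> 'rV[bool]_N} => \matrix_(i, j) f i 0 j).
    by move=> B; apply/matrixP => i j; rewrite !mxE ffunE mxE.
  move=> f; apply/ffunP => i; rewrite ffunE; apply/matrixP => i' j.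
  by rewrite (ord1 i') !mxE.
rewrite (reindex rows (onW_bij _ rows_bij)) /=.
by apply: eq_bigr => B _; apply: eq_bigr => i _; rewrite ffunE.
Qed.

Lemma card_setE (T : finType) (P : pred T) :
  #|[set x | P x]|%:R = \sum_x (P x)%:R :> R.
Proof.
rewrite -sum1_card natr_sum big_mkcond /=; apply: eq_bigr => x _.
by rewrite inE; case: (P x).
Qed.

Lemma prob_sign_ge0 h N (P : pred 'M[bool]_(h, N)) : 0 <= prob_sign P.
Proof. by rewrite /prob_sign divr_ge0. Qed.

Lemma prob_sign_rows_le h N (P : pred 'M[bool]_(h, N)) (Q : pred 'rV[bool]_N) :
  (forall B, P B -> forall i, Q (row i B)) -> prob_sign P <= prob_sign Q ^+ h.
Proof.
move=> PQ; have cardM : #|{: 'M[bool]_(h, N)}|%:R = #|{: 'rV[bool]_N}|%:R ^+ h :> R.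
  by rewrite !card_mx card_bool -natrX -expnM mul1n mulnC.
rewrite /prob_sign cardM expr_div_n ler_pM2r ?invr_gt0 ?exprn_gt0 ?ltr0n ?card_mx ?expn_gt0 ?card_bool //.
rewrite !card_setE -sum_prod_rows; apply: ler_sum => B _.
case PB: (P B); last by rewrite prodr_ge0.
by rewrite big1 // => i _; rewrite PQ.
Qed.

Lemma nat_sqr_bracket (Y : R) : 1 <= Y ->
  exists2 M : nat, (0 < M)%nat & M%:R ^+ 2 <= Y < 4 * M%:R ^+ 2.
Proof.
move=> Y1; have sY0 : 0 <= Num.sqrt Y := sqrtr_ge0 Y.
have sY2 : Num.sqrt Y ^+ 2 = Y by rewrite sqr_sqrtr //; lra.
have /andP[lo hi] := truncn_itv sY0; set M := Num.truncn _ in lo hi.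
have M0 : 0 <= M%:R :> R by [].
have YM : Y < (M%:R + 1) ^+ 2 by rewrite -sY2 natr1 ltrXn2r ?nnegrE //; lra.
have M1 : (0 < M)%nat.
  by rewrite lt0n; apply/negP => /eqP M_eq0; move: YM; rewrite M_eq0 add0r expr1n; lra.
exists M => //; apply/andP; split.
  by rewrite -sY2 lerXn2r ?nnegrE.
have : 1 <= M%:R :> R by rewrite ler1n.
move: YM; rewrite !expr2; nra.
Qed.

Section SmallBall.
Variables (N : nat) (u1 u2 : 'cV[R]_N) (S : pred 'I_N) (tau rho : R).
Hypothesis small_S : forall j, S j -> `|u1 j 0| <= tau /\ `|u2 j 0| <= tau.
Hypothesis spread_S : forall p q : R,
  rho ^+ 2 * (p ^+ 2 + q ^+ 2) <= \sum_(j | S j) (p * u1 j 0 + q * u2 j 0) ^+ 2.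

Lemma norm_prod_cos_comb_le (t a b : R) (M : nat) :
  0 <= t -> 2 * t * M%:R * tau <= 1 -> 6 <= t ^+ 2 * rho ^+ 2 ->
  `|a| <= M%:R -> `|b| <= M%:R ->
  `|\prod_j cos (t * (a * u1 j 0 + b * u2 j 0))| <= decay a * decay b.
Proof.
move=> t0 tM_tau t_rho aM bM; set w := fun j => t * (a * u1 j 0 + b * u2 j 0).
have w1 j : S j -> `|w j| <= 1.
  move=> /small_S[u1j u2j]; rewrite /w normrM (ger0_norm t0).
  have : `|a * u1 j 0 + b * u2 j 0| <= 2 * (M%:R * tau).
    apply: le_trans (ler_normD _ _) _; rewrite !normrM mulr2n mulrDl mul1r.
    by apply: lerD; apply: ler_pM.
  have := normr_ge0 (a * u1 j 0 + b * u2 j 0); nra.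
have mass : a ^+ 2 + b ^+ 2 <= \sum_(j | S j) w j ^+ 2 / 6.
  have -> : \sum_(j | S j) w j ^+ 2 / 6
      = t ^+ 2 / 6 * \sum_(j | S j) (a * u1 j 0 + b * u2 j 0) ^+ 2.
    by rewrite mulr_sumr; apply: eq_bigr => j _; rewrite /w exprMn; ring.
  have := spread_S a b; have := sqr_ge0 t; have := sqr_ge0 a; have := sqr_ge0 b.
  nra.
have := norm_prod_cos_le w1; rewrite /decay mulf_div mul1r ler_pdivlMr; last first.
  by rewrite mulr_gt0 ?ltr_wpDr ?sqr_ge0.
have := mulr_ge0 (sqr_ge0 a) (sqr_ge0 b); have := normr_ge0 (\prod_j cos (w j)).
set P := `|_|; set T := 1 + _ => P0 ab0 PT.
have T_ge : (1 + a ^+ 2) * (1 + b ^+ 2) <= T ^+ 2.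
  have T1 : 1 + (a ^+ 2 + b ^+ 2) <= T by rewrite /T lerD2l.
  have := sqr_ge0 a; have := sqr_ge0 b; rewrite expr2; nra.
by apply: le_trans PT; apply: ler_wpM2l.
Qed.

Lemma sum_cos_mul_sign_sums_le (t p q : R) (M : nat) :
  0 <= t -> 2 * t * M%:R * tau <= 1 -> 6 <= t ^+ 2 * rho ^+ 2 ->
  `|p| <= M%:R -> `|q| <= M%:R ->
  \sum_(r : 'rV[bool]_N) cos (p * (t * sign_sum u1 r)) * cos (q * (t * sign_sum u2 r))
  <= #|{: 'rV[bool]_N}|%:R * (decay p * decay q).
Proof.
move=> t0 tM_tau t_rho pM qM.
under eq_bigr do rewrite !mulrA.
rewrite sum_cos_mul_sign_sums.
have comb a b j : a * t * u1 j 0 + b * t * u2 j 0 = t * (a * u1 j 0 + b * u2 j 0) by ring.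
under eq_bigr do rewrite comb.
under [X in _ + X]eq_bigr do rewrite -mulNr comb.
have := norm_prod_cos_comb_le t0 tM_tau t_rho pM qM.
have qM' : `|- q| <= M%:R by rewrite normrN.
have := norm_prod_cos_comb_le t0 tM_tau t_rho pM qM'.
rewrite decayN; move: (\prod_j _) (\prod_j _) => P1 P2 bound2 bound1.
have := ler_norm P1; have := ler_norm P2; have : 0 <= #|{: 'rV[bool]_N}|%:R :> R by [].
nra.
Qed.

Lemma sum_fejer_mul_le (t : R) (M : nat) :
  0 <= t -> 2 * t * M%:R * tau <= 1 -> 6 <= t ^+ 2 * rho ^+ 2 ->
  \sum_(r : 'rV[bool]_N) fejer M (t * sign_sum u1 r) * fejer M (t * sign_sum u2 r)
  <= #|{: 'rV[bool]_N}|%:R * (6 * M%:R) ^+ 2.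
Proof.
move=> t0 tM_tau t_rho; rewrite /fejer.
under eq_bigr do rewrite big_distrlr /=.
rewrite exchange_big /=.
apply: (@le_trans _ _ (\sum_(a : 'I_M * 'I_M) \sum_(b : 'I_M * 'I_M)
    #|{: 'rV[bool]_N}|%:R * (decay (a.1%:R - a.2%:R) * decay (b.1%:R - b.2%:R)))).
  apply: ler_sum => a _; rewrite exchange_big /=; apply: ler_sum => b _.
  exact: sum_cos_mul_sign_sums_le t0 tM_tau t_rho (diff_ord_le a) (diff_ord_le b).
set D := \sum_(a : 'I_M * 'I_M) decay (a.1%:R - a.2%:R).
have -> : \sum_(a : 'I_M * 'I_M) \sum_(b : 'I_M * 'I_M)
    #|{: 'rV[bool]_N}|%:R * (decay (a.1%:R - a.2%:R) * decay (b.1%:R - b.2%:R))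
    = #|{: 'rV[bool]_N}|%:R * (D * D).
  by rewrite big_distrlr mulr_sumr; apply: eq_bigr => a _; rewrite mulr_sumr.
rewrite expr2 ler_wpM2l //; apply: ler_pM; rewrite ?sum_pair_decay_le //.
all: by apply: sumr_ge0 => a _; apply: ltW; apply: decay_gt0.
Qed.

Lemma prob_small_le_fejer (t : R) (M : nat) :
  (0 < M)%nat -> 0 <= t -> 2 * t * M%:R * tau <= 1 -> 6 <= t ^+ 2 * rho ^+ 2 ->
  prob_sign (small_sign_sums tau u1 u2) <= 72 / M%:R ^+ 2.
Proof.
move=> M0 t0 tM_tau t_rho; set Z := (#|{: 'rV[bool]_N}|%:R : R).
have Z0 : 0 < Z by rewrite ltr0n card_mx card_bool expn_gt0.
have M4 : 0 < M%:R ^+ 4 :> R by rewrite exprn_gt0 // ltr0n.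
have fejer_bound r : `|sign_sum u1 r| <= tau -> `|sign_sum u2 r| <= tau ->
    1 <= 2 / M%:R ^+ 4 * (fejer M (t * sign_sum u1 r) * fejer M (t * sign_sum u2 r)).
  have tM : 0 <= t * M%:R by rewrite mulr_ge0.
  move=> /(ler_wpM2r tM) s1 /(ler_wpM2r tM) s2.
  rewrite mulrAC ler_pdivlMr // mul1r.
  have := @fejer_mul_ge M (t * sign_sum u1 r) (t * sign_sum u2 r).
  have e x : t * x * M%:R = x * (t * M%:R) by ring.
  rewrite !normrM (ger0_norm t0) !e; lra.
rewrite /prob_sign card_setE ler_pdivrMr //.
apply: (@le_trans _ _ (\sum_(r : 'rV[bool]_N)
    2 / M%:R ^+ 4 * (fejer M (t * sign_sum u1 r) * fejer M (t * sign_sum u2 r)))).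
  apply: ler_sum => r _; rewrite /small_sign_sums.
  case: andP => [[s1 s2]|_]; first exact: fejer_bound.
  by rewrite !mulr_ge0 ?invr_ge0 ?fejer_ge0 ?exprn_ge0.
rewrite -mulr_sumr; apply: le_trans (ler_wpM2l _ (sum_fejer_mul_le t0 tM_tau t_rho)) _.
  by rewrite divr_ge0 ?ltW.
have -> : 2 / M%:R ^+ 4 * (Z * (6 * M%:R) ^+ 2) = 72 / M%:R ^+ 2 * Z.
  by field; rewrite pnatr_eq0 -lt0n.
done.
Qed.

Lemma prob_small_le : 0 < tau -> 0 < rho -> 24 * tau ^+ 2 <= rho ^+ 2 ->
  prob_sign (small_sign_sums tau u1 u2) <= 6912 * tau ^+ 2 / rho ^+ 2.
Proof.
move=> tau0 rho0 tau_rho; have tau2 : 0 < tau ^+ 2 by rewrite exprn_gt0.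
(* [M] is about [rho / (sqrt 24 tau)] and [t = 1 / (2 M tau)]: the kernels stay large on
   the ball while [t rho] is large enough for the characteristic functions to decay. *)
have [M M0 /andP[MY YM]] : exists2 M : nat, (0 < M)%nat
    & M%:R ^+ 2 <= rho ^+ 2 / (24 * tau ^+ 2) < 4 * M%:R ^+ 2.
  by apply: nat_sqr_bracket; rewrite ler_pdivlMr ?mul1r // mulr_gt0.
have Mr0 : 0 < M%:R :> R by rewrite ltr0n.
have M2 : 0 < M%:R ^+ 2 :> R by rewrite exprn_gt0.
have tM : 0 < 2 * M%:R * tau by rewrite !mulr_gt0.
set t := 1 / (2 * M%:R * tau).
apply: le_trans (prob_small_le_fejer (t := t) M0 _ _ _) _.
- by apply: divr_ge0 => //; apply: ltW.
- suff -> : 2 * t * M%:R * tau = 1 by [].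
  by rewrite /t; field; rewrite !gt_eqF.
- have -> : t ^+ 2 * rho ^+ 2 = 6 * (rho ^+ 2 / (24 * tau ^+ 2)) / M%:R ^+ 2.
    by rewrite /t; field; rewrite !gt_eqF.
  by rewrite ler_pdivlMr //; lra.
- rewrite ler_pdivrMr // mulrAC ler_pdivlMr ?exprn_gt0 //.
  move: YM; rewrite ltr_pdivrMr ?mulr_gt0 //; nra.
Qed.

End SmallBall.

Lemma Bases_prob_small_le N d (rho delta : R) (u1 u2 : 'cV[R]_N) :
  0 < rho -> 24 < rho ^+ 2 * (delta * d%:R) -> Bases (2 * d) rho delta u1 u2 ->
  prob_sign (small_sign_sums (1 / Num.sqrt (delta * d%:R)) u1 u2)
  <= 6912 / (rho ^+ 2 * (delta * d%:R)).
Proof.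
move=> rho0 D_large uB; set D := delta * d%:R in D_large *.
set tau := 1 / Num.sqrt D.
have rho2 : 0 < rho ^+ 2 by rewrite exprn_gt0.
have D0 : 0 < D by rewrite -(pmulr_rgt0 _ rho2); lra.
have tau0 : 0 < tau by rewrite divr_gt0 ?sqrtr_gt0.
have tau2 : tau ^+ 2 = D^-1 by rewrite expr_div_n sqr_sqrtr ?ltW // expr1n div1r.
have spread := Bases_spread (d' := 2 * d) tau0 _ (ltW rho0) uB.
have tau_rho : 24 * tau ^+ 2 <= rho ^+ 2.
  by rewrite tau2 -ler_pdivlMr ?invr_gt0 // invrK ltW.
have -> : 6912 / (rho ^+ 2 * D) = 6912 * tau ^+ 2 / rho ^+ 2.
  by rewrite tau2; field; rewrite !gt_eqF.
apply: prob_small_le (small_coords_le (ltW tau0)) _ tau0 rho0 tau_rho.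
apply: spread; have -> : delta * (2 * d)%:R * tau ^+ 2 = 2 * (D / D).
  by rewrite tau2 natrM /D; ring.
by rewrite divff ?gt_eqF ?mulr1.
Qed.

Lemma sgn_mx_mul_row h N (B : 'M[bool]_(h, N)) (u : 'cV[R]_N) i :
  (sgn_mx B *m u) i 0 = sign_sum u (row i B).
Proof. by rewrite !mxE; apply: eq_bigr => j _; rewrite !mxE. Qed.

Lemma norminf_ge N (v : 'cV[R]_N) i : `|v i 0| <= norminf v.
Proof. exact: (le_bigmax 0 (fun i => `|v i 0|) i). Qed.

Lemma prob_sgn_mx_small_le h N (u1 u2 : 'cV[R]_N) (tau : R) :
  prob_sign (fun B : 'M[bool]_(h, N) =>
      (norminf (sgn_mx B *m u1) <= tau) && (norminf (sgn_mx B *m u2) <= tau))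
  <= prob_sign (small_sign_sums tau u1 u2) ^+ h.
Proof.
apply: prob_sign_rows_le => B /andP[h1 h2] i.
by rewrite /small_sign_sums -!sgn_mx_mul_row !(le_trans (norminf_ge _ i)).
Qed.

Lemma lerX_div (p c x : R) (h : nat) :
  0 <= p -> 0 < x -> p <= c / x -> p ^+ h <= c ^+ h * x ^- h.
Proof.
move=> p0 x0 pcx; rewrite -expr_div_n lerXn2r ?nnegrE //.
exact: le_trans pcx.
Qed.

Lemma truncnS_le_ltr (x : R) (d : nat) : ((Num.truncn x).+1 <= d)%nat -> x < d%:R.
Proof. by move=> xd; apply: lt_le_trans (truncnS_gt x) _; rewrite ler_nat. Qed.

Theorem corollary5p3 :
  exists C1 : R, 1 < C1 /\
  forall rho delta : R, 0 < rho < 1 -> 0 < delta < 1 ->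
  exists d0 : nat, forall d : nat, (d0 <= d)%nat ->
  forall (h N : nat) (u1 u2 : 'cV[R]_N),
    Bases (2 * d) rho delta u1 u2 ->
    prob_sign (fun B : 'M[bool]_(h, N) =>
        (norminf (sgn_mx B *m u1) <= 1 / Num.sqrt (delta * d%:R))
        && (norminf (sgn_mx B *m u2) <= 1 / Num.sqrt (delta * d%:R)))
    <= C1 ^+ h * (rho ^+ 4 * delta * d%:R) ^- h.
Proof.
exists 6912; split=> [|rho delta /andP[rho0 rho1] /andP[delta0 _]]; first lra.
have rho2 : 0 < rho ^+ 2 by rewrite exprn_gt0.
exists (Num.truncn (24 / (rho ^+ 2 * delta))).+1 => d /truncnS_le_ltr d_large h N u1 u2 uB.
have D_large : 24 < rho ^+ 2 * (delta * d%:R).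
  by move: d_large; rewrite ltr_pdivrMr ?mulr_gt0 // mulrA mulrC.
have D0 : 0 < delta * d%:R by rewrite -(pmulr_rgt0 _ rho2); lra.
have rho4D : 0 < rho ^+ 4 * delta * d%:R by rewrite -mulrA mulr_gt0 ?exprn_gt0.
apply: le_trans (prob_sgn_mx_small_le _ _ _ _) _.
apply: lerX_div (prob_sign_ge0 _) rho4D _.
apply: le_trans (Bases_prob_small_le rho0 D_large uB) _.
have rho2D : 0 < rho ^+ 2 * (delta * d%:R) by rewrite mulr_gt0.
have rho42 : rho ^+ 4 <= rho ^+ 2.
  by rewrite (_ : 4 = 2 + 2)%nat // exprD ger_pMl // expr_le1 ?ltW.
rewrite ler_pM2l // lef_pV2 ?posrE // -mulrA; nra.
Qed.
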